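(* Assume the Nested Logit model without outside option described in the context satisfies Assumptions 1 and 2, and let $S \in \mathcal{S}$. Then for every $i \in S$: (I) if $N(i) \subseteq S$, then $\mathsf{BF}(i,S) \le \mathsf{BF}(k,S)$ for all $k \in S$ (in particular $\mathsf{BF}(i,S)$ takes the same value for all $i \in S$ with $N(i) \subseteq S$); (II) if $N(i) \not\subseteq S$, then for every $j \in S \setminus \{i\}$ we have $N(i) = N(j)$ if and only if $\mathsf{BF}(i,S) = \mathsf{BF}(j,S)$. Consequently, with $\mathsf{minBF}(S) = \arg\min_{k \in S} \mathsf{BF}(k,S)$ (the set of items of $S$ attaining the minimum boost factor): (a) if $N(i) \subseteq S$ for some $i \in S$, then $\mathsf{minBF}(S) = \bigcup_{N \in \mathcal{N} : N \subseteq S} N$; otherwise $\mathsf{minBF}(S) \subsetneq N$ for a single nest $N \in \mathcal{N}$ not fully contained in $S$; (b) if $i,j \in S$ and $\mathsf{BF}(i,S) = \mathsf{BF}(j,S) > \min_{k \in S} \mathsf{BF}(k,S)$, then $N(i) = N(j)$; (c) if $i,j \in S$ and $\mathsf{BF}(i,S) \neq \mathsf{BF}(j,S)$, then $N(i) \neq N(j)$.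
   Context: Items: $[n]=\{1,\dots,n\}$ with $n\ge 2$. Experiment design: fix an integer base $b \ge 2$, let $L = \lceil \log_b n \rceil$, fix an injective map $\sigma: [n] \to \{0,\dots,b-1\}^L$ with coordinates $\sigma_\ell(i)$, let $S_{\ell,-d} = \{i \in [n] : \sigma_\ell(i) \neq d\}$ for $\ell \in \{1,\dots,L\}$, $d \in \{0,\dots,b-1\}$, and $\mathcal{S} = \{S_{\ell,-d}\}_{\ell,d}$; the control assortment $[n]$ is also offered. Nested Logit model without outside option: $\mathcal{N}$ is a partition of $[n]$ into nests, $N(i)$ the nest containing $i$; weights $v_i > 0$; parameters $\lambda_N \in [0,1]$, with an extra weight $v_N>0$ when $\lambda_N=0$. $v_N(S) = (\sum_{i \in N \cap S} v_i)^{\lambda_N}$ if $\lambda_N \in (0,1]$, $v_N(S) = v_N \mathbf{1}(N \cap S \neq \emptyset)$ if $\lambda_N = 0$. For $i \in S$, $\phi(i,S) = \frac{v_{N(i)}(S)}{\sum_{N \in \mathcal{N}} v_N(S)} \cdot \frac{v_i}{\sum_{j \in N(i) \cap S} v_j}$ (no outside option, so $\sum_{i\in S}\phi(i,S)=1$). Boost factor: $\mathsf{BF}(i,S) = \phi(i,S)/\phi(i,[n])$ for $S \in \mathcal{S}$, $i \in S$. Multiplier: $\mathsf{Mult}(N,S) = \left(\frac{\sum_{j \in N} v_j}{\sum_{j \in N \cap S} v_j}\right)^{1-\lambda_N}$. Assumption 1: $\lambda_N = 1$ iff $|N| = 1$. Assumption 2: for every $S \in \mathcal{S}$ and distinct nests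 $N \neq N'$ with $\emptyset \neq N \cap S \neq N$ and $\emptyset \neq N' \cap S \neq N'$, $\mathsf{Mult}(N,S) \neq \mathsf{Mult}(N',S)$. *)

From HB Require Import structures.
From mathcomp Require Import all_boot all_order all_algebra.
From mathcomp Require Import reals exp.
Set Implicit Arguments. Unset Strict Implicit. Unset Printing Implicit Defensive.
Import Order.TTheory GRing.Theory Num.Theory.
Local Open Scope ring_scope.

(* Items are 'I_n (0-based rendering of [n]).  Nests: a partition P of
   [set: 'I_n] (finset's [partition]); N(i) = pblock P i. *)

Section NL.
Variables (R : realType) (n : nat).
Variables (P : {set {set 'I_n}}) (lam vN : {set 'I_n} -> R) (v : 'I_n -> R).

Definition nestw (N S : {set 'I_n}) : R :=
  if lam N == 0 then (if N :&: S != set0 then vN N else 0)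
  else (\sum_(j in N :&: S) v j) `^ (lam N).

Definition phi (i : 'I_n) (S : {set 'I_n}) : R :=
  nestw (pblock P i) S / (\sum_(N in P) nestw N S)
  * (v i / \sum_(j in pblock P i :&: S) v j).

Definition BF (i : 'I_n) (S : {set 'I_n}) : R := phi i S / phi i [set: 'I_n].

Definition Mult (N S : {set 'I_n}) : R :=
  ((\sum_(j in N) v j) / (\sum_(j in N :&: S) v j)) `^ (1 - lam N).

Definition minBF (S : {set 'I_n}) : {set 'I_n} :=
  [set k in S | [forall k' in S, BF k S <= BF k' S]].
End NL.

(* Experiment design: L = ceil(log_b n) = up_log b n, sigma injective,
   S_{l,-d} = {i | sigma_l(i) <> d}, l in 'I_L (0-based), d in 'I_b. *)
Definition Sdesign (n b : nat) (sigma : 'I_n -> {ffun 'I_(up_log b n) -> 'I_b})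
  (l : 'I_(up_log b n)) (d : 'I_b) : {set 'I_n} :=
  [set i | sigma i l != d].

From HB Require Import structures.
From mathcomp Require Import all_boot all_order all_algebra.
From mathcomp Require Import reals exp.
From mathcomp Require Import ring.
Set Implicit Arguments. Unset Strict Implicit.
Import Order.TTheory GRing.Theory Num.Theory.
Local Open Scope ring_scope.

(* For i in S the boost factor factors as BF(i,S) = C(S) * Mult(N(i),S), where
   C(S) = sum_N v_N([n]) / sum_N v_N(S) > 0 does not depend on i.  The multiplier
   of a nest contained in S is 1, while a nest only partially covered by S has
   lambda_N < 1 by Assumption 1 and weight ratio > 1, hence multiplier > 1.
   So the minimum of BF over S is attained exactly on the fully covered nests,
   and by Assumption 2 the value of BF on a partially covered nest identifies
   that nest. *)

Lemma sumr_gt0_mem (R : numDomainType) (I : finType) (A : pred I) (F : I -> R) x :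
  (forall i, A i -> 0 <= F i) -> A x -> 0 < F x -> 0 < \sum_(i | A i) F i.
Proof.
move=> F_ge0 Ax Fx_gt0; rewrite (bigD1 x) //=.
by rewrite ltr_pwDl // sumr_ge0 // => i /andP[/F_ge0].
Qed.

Section NestedLogit.
Variables (R : realType) (n : nat) (P : {set {set 'I_n}}).
Variables (lam vN : {set 'I_n} -> R) (v : 'I_n -> R).
Hypothesis v_gt0 : forall i, 0 < v i.
Hypothesis vN_gt0 : forall N, N \in P -> lam N = 0 -> 0 < vN N.

Local Notation w := (nestw lam vN v).
Local Notation Mult := (Mult lam v).
Local Notation BF := (BF P lam vN v).
Local Notation minBF := (minBF P lam vN v).

Lemma sum_v_gt0 (A : {set 'I_n}) : A != set0 -> 0 < \sum_(j in A) v j.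
Proof.
case/set0Pn=> x xA; apply: (sumr_gt0_mem (x := x)) => // j _.
exact: ltW.
Qed.

Lemma nestw_ge0 (N S : {set 'I_n}) : N \in P -> 0 <= w N S.
Proof.
move=> NP; rewrite /nestw; case: ifP => [/eqP lam0|_]; last exact: powR_ge0.
by case: ifP => // _; rewrite ltW // vN_gt0.
Qed.

Lemma nestw_gt0 (N S : {set 'I_n}) : N \in P -> N :&: S != set0 -> 0 < w N S.
Proof.
move=> NP NS; rewrite /nestw; case: ifP => [/eqP lam0|_].
  by rewrite NS vN_gt0.
exact/powR_gt0/sum_v_gt0.
Qed.

Lemma sum_nestw_gt0 (N S : {set 'I_n}) : N \in P -> N :&: S != set0 ->
  0 < \sum_(M in P) w M S.
Proof.
move=> NP NS; apply: (sumr_gt0_mem (x := N)) => //; last exact: nestw_gt0.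
by move=> M /nestw_ge0.
Qed.

(* With V(A) the weight of A, w N S / w N [n] = (V(N :&: S) / V(N)) ^ lam N,
   also when lam N = 0 since then both weights equal vN N. *)
Lemma nestw_ratio_Mult (N S : {set 'I_n}) : N \in P -> N :&: S != set0 ->
  w N S / w N [set: 'I_n] * ((\sum_(j in N) v j) / (\sum_(j in N :&: S) v j))
  = Mult N S.
Proof.
move=> NP NS; have N0 : N != set0 by apply: contraNneq NS => ->; rewrite set0I.
have VS_gt0 := sum_v_gt0 NS; have V_gt0 := sum_v_gt0 N0.
rewrite /nestw /Mult setIT N0 NS; case: ifP => [/eqP lam0|_].
  rewrite lam0 subr0 powRr1 ?divr_ge0 ?ltW // divff ?mul1r //.
  by rewrite gt_eqF ?vN_gt0.
set x := (\sum_(j in N) v j) / _.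
have x_gt0 : 0 < x by rewrite divr_gt0.
have -> : \sum_(j in N) v j = x * \sum_(j in N :&: S) v j.
  by rewrite /x mulrAC -mulrA divff ?mulr1 // gt_eqF.
rewrite powRM ?ltW // powRB ?powRr1 ?ltW //; last first.
  by rewrite (gt_eqF x_gt0) implybT.
have xl_neq0 : x `^ lam N != 0 by rewrite gt_eqF // powR_gt0.
have VSl_neq0 : (\sum_(j in N :&: S) v j) `^ lam N != 0.
  by rewrite gt_eqF // powR_gt0.
by field; rewrite xl_neq0 VSl_neq0.
Qed.

Lemma Mult_subset (N S : {set 'I_n}) : N != set0 -> N \subset S -> Mult N S = 1.
Proof.
move=> N0 /setIidPl NS; rewrite /Mult NS divff ?powR1 //.
by rewrite gt_eqF // sum_v_gt0.
Qed.

Hypothesis lam_ge0_le1 : forall N, N \in P -> 0 <= lam N <= 1.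
Hypothesis lam_eq1_singleton : forall N, N \in P -> (lam N == 1) = (#|N| == 1%N).

Lemma Mult_gt1 (N S : {set 'I_n}) :
  N \in P -> N :&: S != set0 -> ~~ (N \subset S) -> 1 < Mult N S.
Proof.
move=> NP NS /subsetPn[j jN jS].
case/set0Pn: (NS) => i /setIP[iN iS].
have lam_lt1 : lam N < 1.
  case/andP: (lam_ge0_le1 NP) => _ lam_le1.
  rewrite lt_neqAle lam_le1 andbT lam_eq1_singleton //.
  apply/negP => /cards1P[a Na]; move: iN jN; rewrite Na !inE => /eqP ia /eqP ja.
  by rewrite ja -ia iS in jS.
have NSc : N :\: S != set0 by apply/set0Pn; exists j; rewrite !inE jN jS.
have V_split : \sum_(j in N) v j
               = \sum_(j in N :&: S) v j + \sum_(j in N :\: S) v j.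
  rewrite (bigID (mem S)) /=.
  by congr (_ + _); apply: eq_bigl => k; rewrite !inE andbC.
have VS_gt0 := sum_v_gt0 NS; have VSc_gt0 := sum_v_gt0 NSc.
have ratio_gt1 : 1 < (\sum_(j in N) v j) / (\sum_(j in N :&: S) v j).
  by rewrite ltr_pdivlMr // mul1r V_split ltrDl.
have one_pow : 1 `^ (1 - lam N) = 1 :> R by rewrite powR1.
rewrite /Mult -[X in X < _]one_pow; apply: gt0_ltr_powR => //.
- by rewrite subr_gt0.
- by rewrite nnegrE.
- by rewrite nnegrE ltW // (lt_trans ltr01).
Qed.

Lemma Mult_ge1 (N S : {set 'I_n}) : N \in P -> N :&: S != set0 -> 1 <= Mult N S.
Proof.
move=> NP NS; have [NsubS|NnsubS] := boolP (N \subset S).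
  by rewrite Mult_subset //; apply: contraNneq NS => ->; rewrite set0I.
exact/ltW/Mult_gt1.
Qed.

Hypothesis partP : partition P [set: 'I_n].

Let pblockP i : pblock P i \in P.
Proof. by case/and3P: partP => /eqP covP _ _; rewrite pblock_mem // covP inE. Qed.

Let mem_pblockT i : i \in pblock P i.
Proof. by case/and3P: partP => /eqP covP _ _; rewrite mem_pblock covP inE. Qed.

Let pblockI_neq0 i (S : {set 'I_n}) : i \in S -> pblock P i :&: S != set0.
Proof. by move=> iS; apply/set0Pn; exists i; rewrite inE mem_pblockT. Qed.

Definition BF_scale (S : {set 'I_n}) : R :=
  (\sum_(N in P) w N [set: 'I_n]) / (\sum_(N in P) w N S).

Lemma BF_scale_gt0 (S : {set 'I_n}) i : i \in S -> 0 < BF_scale S.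
Proof.
move=> iS; apply: divr_gt0; apply: (sum_nestw_gt0 (pblockP i)).
  exact/pblockI_neq0/in_setT.
exact: pblockI_neq0.
Qed.

Lemma BF_Mult (S : {set 'I_n}) i :
  i \in S -> BF i S = BF_scale S * Mult (pblock P i) S.
Proof.
move=> iS; rewrite -nestw_ratio_Mult ?pblockI_neq0 //.
have ZS := sum_nestw_gt0 (pblockP i) (pblockI_neq0 iS).
have ZT := sum_nestw_gt0 (pblockP i) (pblockI_neq0 (in_setT i)).
have wS := nestw_gt0 (pblockP i) (pblockI_neq0 iS).
have wT := nestw_gt0 (pblockP i) (pblockI_neq0 (in_setT i)).
have VS := sum_v_gt0 (pblockI_neq0 iS).
have VT := sum_v_gt0 (pblockI_neq0 (in_setT i)); rewrite setIT in VT.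
rewrite /BF /phi /BF_scale setIT.
by field; rewrite !gt_eqF // v_gt0.
Qed.

Lemma BF_full_nest_le (S : {set 'I_n}) i k :
  i \in S -> pblock P i \subset S -> k \in S -> BF i S <= BF k S.
Proof.
move=> iS iNS kS; rewrite !BF_Mult // (Mult_subset _ iNS); last first.
  by apply/set0Pn; exists i.
by rewrite mulr1 ler_pMr ?(BF_scale_gt0 iS) // Mult_ge1 ?pblockI_neq0.
Qed.

Lemma BF_full_lt_partial (S : {set 'I_n}) i k :
  i \in S -> ~~ (pblock P i \subset S) -> pblock P k \subset S -> BF k S < BF i S.
Proof.
move=> iS iNS kNS; have kS : k \in S by apply: (subsetP kNS).
rewrite !BF_Mult // (Mult_subset _ kNS); last by apply/set0Pn; exists k.
by rewrite mulr1 ltr_pMr ?(BF_scale_gt0 iS) // Mult_gt1 ?pblockI_neq0.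
Qed.

Lemma minBF_full_nests (S : {set 'I_n}) i : i \in S -> pblock P i \subset S ->
  minBF S = \bigcup_(N in P | N \subset S) N.
Proof.
move=> iS iNS; apply/setP => k; rewrite inE; apply/andP/bigcupP.
  case=> kS /forall_inP kmin; exists (pblock P k) => //.
  rewrite pblockP; apply: contraT => kNS.
  by have := kmin i iS; rewrite leNgt BF_full_lt_partial.
case=> N /andP[NP NS] kN; have kNE : pblock P k = N.
  by case/and3P: partP => _ trivP _; apply: def_pblock.
have kS : k \in S by apply: (subsetP NS).
by split=> //; apply/forall_inP => k' k'S; apply: BF_full_nest_le; rewrite ?kNE.
Qed.

Lemma BF_neq_pblock_neq (S : {set 'I_n}) i j :
  i \in S -> j \in S -> BF i S != BF j S -> pblock P i != pblock P j.
Proof. by move=> iS jS; apply: contra_neq => Nij; rewrite !BF_Mult // Nij. Qed.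

Variable S : {set 'I_n}.
Hypothesis Mult_partial_inj : forall N N', N \in P -> N' \in P -> N != N' ->
  N :&: S != set0 -> N :&: S != N -> N' :&: S != set0 -> N' :&: S != N' ->
  Mult N S != Mult N' S.

Lemma partial_pblock_eq_BF i j : i \in S -> ~~ (pblock P i \subset S) -> j \in S ->
  (pblock P i = pblock P j <-> BF i S = BF j S).
Proof.
move=> iS iNS jS; rewrite !BF_Mult //; split=> [-> //|].
move/mulfI; rewrite gt_eqF ?(BF_scale_gt0 iS) // => /(_ isT) Mij.
have [//|Nij] := eqVneq (pblock P i) (pblock P j).
have [jNS|jNS] := boolP (pblock P j \subset S).
  have jN0 : pblock P j != set0 by apply/set0Pn; exists j.
  have := Mult_gt1 (pblockP i) (pblockI_neq0 iS) iNS.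
  by rewrite Mij Mult_subset // ltxx.
have partial k : ~~ (pblock P k \subset S) -> pblock P k :&: S != pblock P k.
  by apply: contra => /eqP <-; apply: subsetIr.
have := Mult_partial_inj (pblockP i) (pblockP j) Nij
  (pblockI_neq0 iS) (partial _ iNS) (pblockI_neq0 jS) (partial _ jNS).
by rewrite Mij eqxx.
Qed.

Lemma minBF_proper_nest : (0 < n)%N ->
  ~ (exists2 i, i \in S & pblock P i \subset S) ->
  exists N, [/\ N \in P, ~~ (N \subset S) & minBF S \proper N].
Proof.
move=> n_gt0 no_full.
have nsub k : k \in S -> ~~ (pblock P k \subset S).
  by move=> kS; apply/negP => kNS; apply: no_full; exists k.
have [->|/set0Pn[k]] := eqVneq (minBF S) set0.
  pose x0 : 'I_n := Ordinal n_gt0; exists (pblock P x0); split=> //.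
    apply/negP => x0NS; apply: no_full; exists x0 => //.
    exact: subsetP x0NS x0 (mem_pblockT x0).
  by rewrite proper0; apply/set0Pn; exists x0.
rewrite inE => /andP[kS /forall_inP kmin].
exists (pblock P k); split; rewrite ?nsub //.
have minBF_sub : minBF S \subset pblock P k.
  apply/subsetP => k'; rewrite inE => /andP[k'S /forall_inP k'min].
  have BFkk' : BF k S = BF k' S by apply/eqP; rewrite eq_le kmin ?k'min.
  by rewrite (partial_pblock_eq_BF kS (nsub k kS) k'S).2 //.
rewrite properEneq minBF_sub andbT; apply: contra (nsub k kS) => /eqP <-.
by apply/subsetP => x; rewrite inE => /andP[].
Qed.

Lemma BF_eq_above_min_pblock i j : i \in S -> j \in S -> BF i S = BF j S ->
  (exists2 k, k \in S & BF k S < BF i S) -> pblock P i = pblock P j.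
Proof.
move=> iS jS BFij [k kS BFki]; apply/partial_pblock_eq_BF => //.
by apply: contraL BFki => iNS; rewrite -leNgt BF_full_nest_le.
Qed.

End NestedLogit.

Unset Implicit Arguments. Set Strict Implicit.

Theorem proposition4p7 (R : realType) (n b : nat)
  (sigma : 'I_n -> {ffun 'I_(up_log b n) -> 'I_b})
  (P : {set {set 'I_n}}) (lam vN : {set 'I_n} -> R) (v : 'I_n -> R)
  (l0 : 'I_(up_log b n)) (d0 : 'I_b) :
  (2 <= n)%N -> (2 <= b)%N -> injective sigma ->
  partition P [set: 'I_n] ->
  (forall i, 0 < v i) ->
  (forall N, N \in P -> 0 <= lam N <= 1) ->
  (forall N, N \in P -> lam N = 0 -> 0 < vN N) ->
  (* Assumption 1 *)
  (forall N, N \in P -> (lam N == 1) = (#|N| == 1%N)) ->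
  (* Assumption 2 *)
  (forall (l : 'I_(up_log b n)) (d : 'I_b) N N',
      let S := Sdesign sigma l d in
      N \in P -> N' \in P -> N != N' ->
      N :&: S != set0 -> N :&: S != N ->
      N' :&: S != set0 -> N' :&: S != N' ->
      Mult lam v N S != Mult lam v N' S) ->
  let S := Sdesign sigma l0 d0 in
  let BF' := BF P lam vN v in
  let Nst := pblock P in
  [/\ (* (I) *)
      (forall i, i \in S -> Nst i \subset S ->
         forall k, k \in S -> BF' i S <= BF' k S),
      (* (II) *)
      (forall i, i \in S -> ~~ (Nst i \subset S) ->
         forall j, j \in S -> j != i -> (Nst i = Nst j <-> BF' i S = BF' j S)),
      (* (a) *)
      ((exists2 i, i \in S & Nst i \subset S) ->
         minBF P lam vN v S = \bigcup_(N in P | N \subset S) N)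
      /\ ((~ exists2 i, i \in S & Nst i \subset S) ->
         exists N, [/\ N \in P, ~~ (N \subset S) & minBF P lam vN v S \proper N]),
      (* (b) *)
      (forall i j, i \in S -> j \in S -> BF' i S = BF' j S ->
         (exists2 k, k \in S & BF' k S < BF' i S) -> Nst i = Nst j)
    & (* (c) *)
      (forall i j, i \in S -> j \in S -> BF' i S != BF' j S -> Nst i != Nst j)].
Proof.
move=> n_ge2 _ _ partP v_gt0 lam01 vN_gt0 lam1 Mult_inj S BF' Nst.
have Mult_injS := Mult_inj l0 d0.
split.
- move=> i iS iNS k kS.
  exact: (BF_full_nest_le v_gt0 vN_gt0 lam01 lam1 partP iS iNS kS).
- move=> i iS iNS j jS _.
  exact: (partial_pblock_eq_BF v_gt0 vN_gt0 lam01 lam1 partP Mult_injS).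
- split; first by case=> i; apply: (minBF_full_nests v_gt0 vN_gt0 lam01 lam1 partP).
  exact: (minBF_proper_nest v_gt0 vN_gt0 lam01 lam1 partP Mult_injS (ltnW n_ge2)).
- exact: (BF_eq_above_min_pblock v_gt0 vN_gt0 lam01 lam1 partP Mult_injS).
- exact: (BF_neq_pblock_neq v_gt0 vN_gt0 partP).
Qed.
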